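(* Let $X$ be a connected bipartite graph with $n$ vertices and $m\ge n$ edges, and let $\{a,b\}\neq\{\alpha,\beta\}$ be edges of $X$. If $\mathbf f_{ab}$ and $\mathbf f_{\alpha\beta}$ are strongly cospectral with respect to the adjacency matrix of the line graph $\mathcal L(X)$, then $\{\{a,b\},\{\alpha,\beta\}\}$ is an edge-cut of $X$ (i.e. deleting these two edges disconnects $X$).
   Context: The line graph $\mathcal L(X)$ has vertex set $E(X)$ with edges adjacent iff they share an endpoint; $\mathbf f_{ab}$ is the vertex state of the vertex corresponding to $\{a,b\}$. For $M=\sum_\theta\theta F_\theta$ (orthogonal spectral projections), vectors $\mathbf x,\mathbf y$ are strongly cospectral if $F_\theta\mathbf x=\pm F_\theta\mathbf y$ for every eigenvalue $\theta$. *)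

From HB Require Import structures.
From mathcomp Require Import all_boot all_order all_algebra.
From mathcomp Require Import all_reals.
Set Implicit Arguments. Unset Strict Implicit. Unset Printing Implicit Defensive.
Import Order.TTheory GRing.Theory Num.Theory.
Local Open Scope ring_scope.

Definition simple_graph (V : finType) (adj : rel V) :=
  symmetric adj /\ irreflexive adj.

Definition connected (V : finType) (adj : rel V) :=
  forall x y : V, connect adj x y.

Definition bipartite (V : finType) (adj : rel V) :=
  exists c : V -> bool, forall x y, adj x y -> c x != c y.

Definition is_edge (V : finType) (adj : rel V) (e : {set V}) : bool :=
  [exists x, exists y, adj x y && (e == [set x; y])].

Definition edge_t (V : finType) (adj : rel V) := {e : {set V} | is_edge adj e}.

Definition nedges (V : finType) (adj : rel V) : nat := #|{: edge_t adj}|.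

Definition line_adj (R : nzRingType) (V : finType) (adj : rel V)
  : 'M[R]_(nedges adj) :=
  \matrix_(i, j)
    ((i != j) && (val (enum_val i : edge_t adj) :&: val (enum_val j : edge_t adj) != set0))%:R.

Definition lg_state (R : nzRingType) (V : finType) (adj : rel V) (e : {set V})
  : 'rV[R]_(nedges adj) :=
  \row_i (val (enum_val i : edge_t adj) == e)%:R.

(* Orthogonal projection onto the row space of a matrix M (acting on row
   vectors by right multiplication): with B a basis of the row space,
   P = B^T (B B^T)^-1 B. *)
Definition orth_proj (R : fieldType) (n : nat) (M : 'M[R]_n) : 'M[R]_n :=
  let B := row_base M in (B^T *m invmx (B *m B^T)) *m B.

Definition spec_proj (R : fieldType) (n : nat) (A : 'M[R]_n) (theta : R)
  : 'M[R]_n := orth_proj (eigenspace A theta).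

Definition strongly_cospectral (R : fieldType) (n : nat) (A : 'M[R]_n)
  (x y : 'rV[R]_n) :=
  forall theta : R, eigenvalue A theta ->
    x *m spec_proj A theta = y *m spec_proj A theta \/
    x *m spec_proj A theta = - (y *m spec_proj A theta).

Definition delete_edges (V : finType) (adj : rel V) (e1 e2 : {set V}) : rel V :=
  fun x y => adj x y && ([set x; y] != e1) && ([set x; y] != e2).

Definition edge_cut2 (V : finType) (adj : rel V) (e1 e2 : {set V}) :=
  ~ connected (delete_edges adj e1 e2).

From HB Require Import structures.
From mathcomp Require Import all_boot all_order all_algebra.
From mathcomp Require Import all_reals.
Import Order.TTheory GRing.Theory Num.Theory.
Set Implicit Arguments. Unset Strict Implicit.
Local Open Scope ring_scope.

(** Write [N] for the vertex-edge incidence matrix of X, so that the adjacency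
    matrix of L(X) is [N^T N - 2]. Suppose a and b are still joined by a path
    after deleting both edges; closing it with the edge ab gives a cycle of X,
    which is even because X is bipartite. Orienting the cycle and giving each
    of its edges the colour sign of its tail yields a vector [z] with [z N = 0]
    (at every vertex the two incident cycle edges carry opposite signs), hence
    an eigenvector of L(X) for the eigenvalue -2. Its coordinate at ab is
    nonzero while its coordinate at alpha-beta vanishes. Pairing the spectral
    projections of f_ab and f_alpha-beta at -2 with [z] then contradicts strong
    cospectrality. *)

Section OrthogonalProjection.
Variable R : realFieldType.

Lemma mulmx_trmx_eq0 n (w : 'rV[R]_n) : w *m w^T = 0 -> w = 0.
Proof.
move=> /(congr1 (fun M : 'M_1 => M 0 0)); rewrite mxE [RHS]mxE => sum_sq0.
apply/rowP => j; rewrite mxE; apply/eqP; rewrite -sqrf_eq0 expr2.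
have sq_ge0 k : predT k -> 0 <= w 0 k * w^T k 0 by rewrite mxE sqr_ge0.
by have := (psumr_eq0P sq_ge0 sum_sq0 (i:=j) isT); rewrite mxE => ->.
Qed.

Lemma gram_unitmx r n (B : 'M[R]_(r, n)) : row_free B -> B *m B^T \in unitmx.
Proof.
move=> freeB; rewrite -row_free_unit; apply: inj_row_free => v vBBt0.
have : (v *m B) *m (v *m B)^T = 0 by rewrite trmx_mul mulmxA -(mulmxA v) vBBt0 mul0mx.
by move/mulmx_trmx_eq0/eqP; rewrite mulmx_free_eq0 // => /eqP.
Qed.

Lemma gram_proj_fixed r n (B : 'M[R]_(r, n)) (z : 'rV[R]_n) :
  row_free B -> (z <= B)%MS -> (B^T *m invmx (B *m B^T) *m B) *m z^T = z^T.
Proof.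
move=> freeB /mulmxKpV <-; rewrite trmx_mul !mulmxA -(mulmxA _ B) -(mulmxA _ (B *m B^T)).
by rewrite -mulmxA (mulmxA (invmx _)) mulVmx ?mul1mx // gram_unitmx.
Qed.

Lemma orth_proj_fixed n (M : 'M[R]_n) (z : 'rV[R]_n) :
  (z <= M)%MS -> orth_proj M *m z^T = z^T.
Proof. by move=> zM; apply: gram_proj_fixed; rewrite ?row_base_free ?eq_row_base. Qed.

Lemma strongly_cospectral_eigenvector n (A : 'M[R]_n) (x y z : 'rV[R]_n) theta :
  strongly_cospectral A x y -> (z <= eigenspace A theta)%MS ->
  x *m z^T = y *m z^T \/ x *m z^T = - (y *m z^T).
Proof.
move=> cospec zE; have [->|nz_z] := eqVneq z 0; first by left; rewrite trmx0 !mulmx0.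
have eig_theta : eigenvalue A theta by apply/eigenvalueP; exists z => //; apply/eigenspaceP.
have proj_z (u : 'rV_n) : u *m spec_proj A theta *m z^T = u *m z^T.
  by rewrite -mulmxA orth_proj_fixed.
by rewrite -proj_z -[y *m _]proj_z; case: (cospec _ eig_theta) => ->;
  [left | right; rewrite mulNmx].
Qed.

End OrthogonalProjection.

Lemma closed_walk_balanced (T : eqType) (a b : T) (p : seq T) :
  last a p = b ->
  perm_eq (unzip1 (rcons (zip (belast a p) p) (b, a)))
          (unzip2 (rcons (zip (belast a p) p) (b, a))).
Proof.
move=> last_b; rewrite /unzip1 /unzip2 !map_rcons -/(unzip1 _) -/(unzip2 _).
rewrite unzip1_zip ?size_belast // unzip2_zip ?size_belast //= -last_b -lastI.
by rewrite perm_sym perm_rcons.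
Qed.

Lemma path_arcs (T : eqType) (e : rel T) x p :
  path e x p -> forall u, u \in zip (belast x p) p -> e u.1 u.2.
Proof.
elim: p x => [|y p IHp] x //= /andP[exy yp] u.
by rewrite inE => /orP[/eqP -> // | ]; apply: IHp.
Qed.

Section LineGraph.
Variables (V : finType) (adj : rel V).
Hypothesis adj_simple : simple_graph adj.

Definition lg_edge (i : 'I_(nedges adj)) : {set V} := val (enum_val i : edge_t adj).

Lemma lg_edge_inj : injective lg_edge.
Proof. by move=> i j /val_inj/enum_val_inj. Qed.

Lemma lg_edgeP i : exists x y, adj x y /\ lg_edge i = [set x; y].
Proof.
case/existsP: (valP (enum_val i : edge_t adj)) => x /existsP[y /andP[xy /eqP e]].
by exists x, y.
Qed.

Lemma lg_edge_of x y : adj x y -> exists i, lg_edge i = [set x; y].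
Proof.
move=> xy; have e : is_edge adj [set x; y].
  by apply/existsP; exists x; apply/existsP; exists y; rewrite xy eqxx.
by exists (enum_rank (exist _ [set x; y] e : edge_t adj)); rewrite /lg_edge enum_rankK.
Qed.

Lemma card_lg_edge i : #|lg_edge i| = 2.
Proof.
have [x [y [xy ->]]] := lg_edgeP i; rewrite cards2.
by case: eqP xy => [-> | //]; rewrite adj_simple.2.
Qed.

Lemma card_lg_edgeI i j : i != j -> (#|lg_edge i :&: lg_edge j| <= 1)%N.
Proof.
apply: contraR; rewrite -ltnNge => two_common; apply/eqP/lg_edge_inj.
have eqI k : (lg_edge i :&: lg_edge j \subset lg_edge k) ->
    lg_edge i :&: lg_edge j = lg_edge k.
  by move=> sub; apply/eqP; rewrite eqEcard sub card_lg_edge.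
by rewrite -(eqI i) ?subsetIl // (eqI j) ?subsetIr.
Qed.

Lemma line_adjE (R : nzRingType) i j :
  line_adj R adj i j = #|lg_edge i :&: lg_edge j|%:R - (i == j)%:R *+ 2.
Proof.
rewrite mxE -/(lg_edge i) -/(lg_edge j); have [<-|nij] := eqVneq i j.
  by rewrite setIid card_lg_edge subrr.
rewrite mul0rn subr0 /=; have := card_lg_edgeI nij.
case: eqP => [-> _ | /eqP]; first by rewrite cards0.
by rewrite -card_gt0 => ne0 le1; apply/congr1/eqP; rewrite /= eqn_leq ne0 le1.
Qed.

Lemma sum_lg_edge_eq (R : nzRingType) (e : {set V}) i0 (g : 'I_(nedges adj) -> R) :
  lg_edge i0 = e -> \sum_i (lg_edge i == e)%:R * g i = g i0.
Proof.
move=> i0e; rewrite (bigD1 i0) //= i0e eqxx mul1r big1 ?addr0 // => i ni0.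
by case: eqP => [ie|]; [case/eqP: ni0; apply: lg_edge_inj; rewrite ie | rewrite mul0r].
Qed.

Lemma lg_state_dotE (R : nzRingType) e i (z : 'rV[R]_(nedges adj)) :
  lg_edge i = e -> (lg_state R adj e *m z^T) 0 0 = z 0 i.
Proof.
move=> ie; rewrite mxE -(sum_lg_edge_eq (z 0) ie).
by apply: eq_bigr => k _; rewrite !mxE.
Qed.

(* [z N = 0]: at every vertex the entries of [z] on the incident edges sum to 0. *)
Definition incidence_null (R : nzRingType) (z : 'rV[R]_(nedges adj)) :=
  forall v, \sum_i z 0 i * (v \in lg_edge i)%:R = 0.

Lemma incidence_null_line_adj (R : nzRingType) (z : 'rV[R]_(nedges adj)) :
  incidence_null z -> z *m line_adj R adj = -2 *: z.
Proof.
move=> zN0; apply/rowP => j; rewrite !mxE.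
under eq_bigr do rewrite line_adjE mulrBr.
rewrite sumrB; have -> : \sum_i z 0 i * #|lg_edge i :&: lg_edge j|%:R = 0.
  transitivity (\sum_i \sum_(v in lg_edge j) z 0 i * (v \in lg_edge i)%:R).
    apply: eq_bigr => i _; rewrite -mulr_sumr -sum1_card natr_sum; congr (_ * _).
    rewrite big_mkcond [RHS]big_mkcond; apply: eq_bigr => v _.
    by rewrite inE; case: (v \in lg_edge i); case: (v \in lg_edge j).
  by rewrite exchange_big big1.
rewrite sub0r (bigD1 j) //= eqxx mulrnAr mulr1 big1 ?addr0.
  by rewrite mulNr mulr_natl.
by move=> i /negbTE ->; rewrite mul0rn mulr0.
Qed.

Variables (R : nzRingType) (c : V -> bool).
Hypothesis c_proper : forall x y, adj x y -> c x != c y.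

Definition colour_sign (x : V) : R := if c x then 1 else -1.

Lemma colour_sign_adj x y : adj x y -> colour_sign x = - colour_sign y.
Proof. by move/c_proper; rewrite /colour_sign; case: (c x); case: (c y); rewrite ?opprK. Qed.

Lemma colour_sign_neq0 x : colour_sign x != 0.
Proof. by rewrite /colour_sign; case: (c x); rewrite ?oppr_eq0 oner_eq0. Qed.

Definition arcs_vec (st : seq (V * V)) : 'rV[R]_(nedges adj) :=
  \row_i \sum_(u <- st) (lg_edge i == [set u.1; u.2])%:R * colour_sign u.1.

Lemma arcs_vec_incidence_null st :
  {in st, forall u, adj u.1 u.2} -> perm_eq (unzip1 st) (unzip2 st) ->
  incidence_null (arcs_vec st).
Proof.
move=> st_adj balanced v; under eq_bigr do rewrite mxE mulr_suml.
rewrite exchange_big /=.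
transitivity (\sum_(u <- st) ((u.1 == v)%:R * colour_sign v
                              - (u.2 == v)%:R * colour_sign v)).
  rewrite big_seq [RHS]big_seq; apply: eq_bigr => u /st_adj adj_u.
  have [i0 i0e] := lg_edge_of adj_u.
  under eq_bigr do rewrite -mulrA.
  rewrite (sum_lg_edge_eq _ i0e) i0e !inE.
  have [<-|n1] := eqVneq u.1 v.
    have n21 : u.2 != u.1 by apply: contraTneq adj_u => ->; rewrite adj_simple.2.
    by rewrite (negbTE n21) mulr1 mul1r mul0r subr0.
  rewrite /= eq_sym mul0r sub0r; case: eqP => [<- | _]; last by rewrite mul0r mulr0 oppr0.
  by rewrite mulr1 mul1r (colour_sign_adj adj_u).
rewrite sumrB -!mulr_suml -(big_map fst predT (fun x => (x == v)%:R)).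
by rewrite -(big_map snd predT (fun x => (x == v)%:R)) (perm_big _ balanced) subrr.
Qed.

Lemma cycle_arcs_vec a b e : adj a b -> e != [set a; b] ->
  connect (delete_edges adj [set a; b] e) a b ->
  exists z : 'rV[R]_(nedges adj), [/\ incidence_null z,
    forall i, lg_edge i = [set a; b] -> z 0 i != 0
  & forall j, lg_edge j = e -> z 0 j = 0].
Proof.
move=> ab e_ab /connectP[p p_path last_b].
have arcsP := path_arcs p_path; rewrite /delete_edges /= in arcsP.
set st := rcons (zip (belast a p) p) (b, a).
have st_adj : {in st, forall u, adj u.1 u.2}.
  move=> u; rewrite mem_rcons inE => /orP[/eqP -> | /arcsP /andP[/andP[]//]].
  by rewrite adj_simple.1.
exists (arcs_vec st); split.
- exact: arcs_vec_incidence_null st_adj (closed_walk_balanced (esym last_b)).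
- move=> i ie; rewrite mxE /st -cats1 big_cat big_seq1 /= ie setUC eqxx mul1r.
  rewrite big1_seq ?add0r ?colour_sign_neq0 // => u /= /arcsP/andP[/andP[_ ne_ab] _].
  by rewrite setUC eq_sym (negbTE ne_ab) mul0r.
- move=> j je; rewrite mxE /st -cats1 big_cat big_seq1 /= je setUC (negbTE e_ab) mul0r addr0.
  rewrite big1_seq // => u /= /arcsP/andP[_ ne_e].
  by rewrite eq_sym (negbTE ne_e) mul0r.
Qed.

End LineGraph.

Theorem mainTheorem13 (R : realType) (V : finType) (adj : rel V)
  (n m : nat) (a b alpha beta : V) :
  simple_graph adj -> connected adj -> bipartite adj ->
  #|V| = n -> nedges adj = m -> (n <= m)%N ->
  adj a b -> adj alpha beta -> [set a; b] != [set alpha; beta] ->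
  strongly_cospectral (line_adj R adj)
    (lg_state R adj [set a; b]) (lg_state R adj [set alpha; beta]) ->
  edge_cut2 adj [set a; b] [set alpha; beta].
Proof.
move=> adj_simple _ [c c_proper] _ _ _ ab alpha_beta ne_edges cospec connected_rest.
have ne_edges' : [set alpha; beta] != [set a; b] by rewrite eq_sym.
have [z [z_null z_ab z_alpha_beta]] :=
  cycle_arcs_vec adj_simple R c_proper ab ne_edges' (connected_rest a b).
have z_eigen : (z <= eigenspace (line_adj R adj) (-2))%MS.
  by apply/eigenspaceP; exact: incidence_null_line_adj.
have [i ie] := lg_edge_of ab; have [j je] := lg_edge_of alpha_beta.
have /eqP := z_ab i ie; apply.
case: (strongly_cospectral_eigenvector cospec z_eigen) => /(congr1 (fun M : 'M_1 => M 0 0)).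
  by rewrite (lg_state_dotE _ ie) (lg_state_dotE _ je) (z_alpha_beta j je).
by rewrite (lg_state_dotE _ ie) mxE (lg_state_dotE _ je) (z_alpha_beta j je) oppr0.
Qed.
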